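(* Let $g_1, g_2\in G(\Gamma)$ be strongly non-split. Then there exists a linear order on $V(\Gamma)$ together with vertices $v_1\in\operatorname{supp}(g_1)$ and $v_2\in\operatorname{supp}(g_2)$ such that both the $v_1$-conical conjugate of $g_1$ and the $v_2$-conical conjugate of $g_2$ are strongly non-split and SD-conical.
   Context: $\Gamma$ is a finite simple graph and $G(\Gamma)=\langle v\in V(\Gamma)\mid [v_i,v_j]=1 \text{ if } \{v_i,v_j\}\notin E(\Gamma)\rangle$, i.e. the right-angled Artin group on the complement graph $\Gamma^c$ (generators joined by an edge of $\Gamma$ do not commute). $|g|$ is word length and $\operatorname{supp}(g)$ is the set of generators appearing in a reduced word for $g$. A decomposition $g=g_1\cdots g_k$ is geodesic if $|g|=|g_1|+\cdots+|g_k|$. $g$ is cyclically reduced if it has minimal word length in its conjugacy class. $g$ is non-split if $\operatorname{supp}(g)$ spans a connected subgraph of $\Gamma$; it is strongly non-split if it is non-split and no generator $v$ disjointly commutes with $g$ (i.e. there is no $v\notin\operatorname{supp}(g)$ commuting with every generator in $\operatorname{supp}(g)$). $S(g)$ is the set of generators $v$ such that $g=v^{\pm1}h$ is geodesic for some $h$; $g$ is $v_0$-conical if $S(g)=\{v_0\}$, and then $v_0=\operatorname{apex}(g)$. Given a linear order on $V(\Gamma)$, a conical element $g$ is SD-conical if $\operatorname{apex}(g)$ does not commute with any generator smaller than it (i.e. $v<\operatorname{apex}(g)$ implies $\{v,\operatorname{apex}(g)\}\in E(\Gamma)$). For a non-split, cyclically reduced $g$ and $v_0\in\operatorname{supp}(g)$,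 the $v_0$-conical conjugate of $g$ is defined as follows: for a non-split $h$ and $v\in\operatorname{supp}(h)$ there is a unique geodesic decomposition $h=tp$ with $p$ $v$-conical and $v\notin\operatorname{supp}(t)$; starting from $g_0=g$, write $g_i=t_ip_i$ in this way (with $v=v_0$) and set $g_{i+1}=p_it_i$; for the smallest $k$ with $g_k$ $v_0$-conical (such $k\le|V(\Gamma)|-1$ exists), the $v_0$-conical conjugate is $g_k$. It is a conjugate of $g$ obtained by iterated cyclic conjugations, has the same support as $g$, and is again non-split and cyclically reduced. (In the lemma the $g_i$ are implicitly taken cyclically reduced so that conical conjugates are defined.) *)

(* Right-angled Artin group G(Gamma) on the complement graph:
   vertices = a finType T, edges of Gamma = a rel e on T (hypotheses: symmetric,
   irreflexive).  Group elements are represented by words; equality in the group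
   is the equivalence [weq] generated by the defining relations. *)
From mathcomp Require Import all_boot.
From Stdlib Require Import Relations.Relation_Operators.

Set Implicit Arguments.
Unset Strict Implicit.
Unset Printing Implicit Defensive.

Section RAAG.
Variables (T : finType) (e : rel T).

(* a letter (v, b): b = true is v, b = false is v^-1 *)
Definition word := seq (T * bool).

Definition winv (w : word) : word := rev (map (fun x => (x.1, ~~ x.2)) w).

(* elementary moves of the presentation
   < V | [v_i, v_j] = 1 if {v_i, v_j} is not an edge of Gamma > *)
Inductive step : word -> word -> Prop :=
| step_cancel u v a b : step (u ++ [:: (a, b); (a, ~~ b)] ++ v) (u ++ v)
| step_comm u v x y : ~~ e x.1 y.1 -> step (u ++ [:: x; y] ++ v) (u ++ [:: y; x] ++ v).

Definition weq : word -> word -> Prop := clos_refl_sym_trans word step.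

Definition len_of (w : word) (n : nat) : Prop :=
  (exists w', weq w w' /\ size w' = n) /\ (forall w', weq w w' -> n <= size w').

Definition reduced (w : word) : Prop := forall w', weq w w' -> size w <= size w'.

Definition in_supp (g : word) (v : T) : Prop :=
  exists w, weq g w /\ reduced w /\ v \in map fst w.

Definition gdec (g t p : word) : Prop :=
  weq g (t ++ p) /\
  exists nt np, len_of t nt /\ len_of p np /\ len_of g (nt + np).

Definition cyc_red (g : word) : Prop :=
  forall c n m, len_of g n -> len_of (winv c ++ g ++ c) m -> n <= m.

Definition connected_in (P : T -> Prop) : Prop :=
  (exists x, P x) /\
  forall x y, P x -> P y ->
    exists p : seq T, path e x p /\ last x p = y /\ (forall z, z \in p -> P z).

Definition non_split (g : word) : Prop := connected_in (in_supp g).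

Definition disj_comm (v : T) (g : word) : Prop :=
  ~ in_supp g v /\ forall u, in_supp g u -> ~~ e v u.

Definition strongly_non_split (g : word) : Prop :=
  non_split g /\ ~ (exists v, disj_comm v g).

Definition in_S (g : word) (v : T) : Prop :=
  exists b h, gdec g [:: (v, b)] h.

Definition conical (v0 : T) (g : word) : Prop :=
  forall v, in_S g v <-> v = v0.

(* SD-conical w.r.t. the linear order on T given by an injective rank r *)
Definition SD_conical (r : T -> nat) (g : word) : Prop :=
  exists a, conical a g /\ forall v, r v < r a -> e v a.

Definition conical_conj (v0 : T) (g h : word) : Prop :=
  exists (k : nat) (gs : nat -> word),
    weq (gs 0) g /\
    (forall i, i < k ->
       ~ conical v0 (gs i) /\
       exists t p, gdec (gs i) t p /\ conical v0 p /\ ~ in_supp t v0 /\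
                   weq (gs i.+1) (p ++ t)) /\
    conical v0 (gs k) /\ weq h (gs k).

End RAAG.

(* Reduced words for the same element differ only by commutations: the
   cancellation of [a^b] against [a^-b] across letters commuting with [a]
   terminates and is locally confluent modulo commutations.  Hence S(g) is the
   set of letters of a reduced word that can be shuffled to its front, and the
   v-conical decomposition [h = t p] puts into [p] the first [v] together with
   every letter that cannot move to its left.  For cyclically reduced [g] each
   rotation [p t] is again reduced with the same letters, and when [supp g] is
   connected [p] strictly grows until the rotation is v-conical.  So conical
   conjugates exist, have support [supp g] (hence are strongly non-split) and
   apex [v].  Finally take [v1] in [supp g1] and [v2] in [supp g2] equal or
   adjacent to [v1], which exists because [v1] does not disjointly commute with
   [g2]; an order starting with [v1, v2] makes both apexes SD. *)

From mathcomp Require Import all_boot.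
From Stdlib Require Import Relations.Relation_Operators Classical Lia.
From mathcomp Require Import zify.

Set Implicit Arguments.
Unset Strict Implicit.
Unset Printing Implicit Defensive.

Section Raag.
Variables (T : finType) (e : rel T).
Hypothesis e_sym : symmetric e.

Local Notation word := (word T).
Local Notation weq := (weq e).

Definition commutes (a : T) (y : T * bool) := ~~ e a y.1.

Inductive shuffle : word -> word -> Prop :=
| shuffle_refl w : shuffle w w
| shuffle_swap u v x y : ~~ e x.1 y.1 -> shuffle (u ++ x :: y :: v) (u ++ y :: x :: v)
| shuffle_trans a b c : shuffle a b -> shuffle b c -> shuffle a c.

Lemma shuffle_sym a b : shuffle a b -> shuffle b a.
Proof.
elim=> [w|u v x y H|a0 b0 c0 _ H1 _ H2].
- exact: shuffle_refl.
- by apply: shuffle_swap; rewrite e_sym.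
- exact: shuffle_trans H2 H1.
Qed.

Lemma shuffle_catl c a b : shuffle a b -> shuffle (c ++ a) (c ++ b).
Proof.
elim=> [w|u v x y H|a0 b0 c0 _ H1 _ H2].
- exact: shuffle_refl.
- by rewrite !catA; apply: shuffle_swap.
- exact: shuffle_trans H1 H2.
Qed.

Lemma shuffle_cons x a b : shuffle a b -> shuffle (x :: a) (x :: b).
Proof. exact: (shuffle_catl [:: x]). Qed.

Lemma shuffle_perm a b : shuffle a b -> perm_eq a b.
Proof.
elim=> // [u v x y _|a0 b0 c0 _ H1 _ H2]; last exact: perm_trans H1 H2.
rewrite perm_cat2l -[x :: y :: v]/([:: x; y] ++ v) -[y :: x :: v]/([:: y; x] ++ v).
by rewrite perm_cat2r; apply/permP=> P /=; rewrite addnCA.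
Qed.

Lemma shuffle_move x m r : all (commutes x.1) m -> shuffle (x :: m ++ r) (m ++ x :: r).
Proof.
elim: m => [|y m IH] /=; first by move=> _; exact: shuffle_refl.
case/andP=> Hy Hm.
apply: shuffle_trans (shuffle_swap [::] (m ++ r) Hy) _ => /=.
exact: shuffle_cons (IH Hm).
Qed.

Lemma shuffle_weq a b : shuffle a b -> weq a b.
Proof.
elim=> [w|u v x y H|a0 b0 c0 _ H1 _ H2].
- exact: rst_refl.
- exact/rst_step/step_comm.
- exact: rst_trans H1 H2.
Qed.

Lemma step_catl c a b : step e a b -> step e (c ++ a) (c ++ b).
Proof.
case=> [u v a0 b0|u v x y H].
- by have := step_cancel e (c ++ u) v a0 b0; rewrite -!catA.
- by have := @step_comm T e (c ++ u) v x y H; rewrite -!catA.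
Qed.

Lemma step_catr c a b : step e a b -> step e (a ++ c) (b ++ c).
Proof.
case=> [u v a0 b0|u v x y H]; rewrite -!catA.
- exact: (step_cancel e u (v ++ c) a0 b0).
- exact: (@step_comm T e u (v ++ c) x y H).
Qed.

Lemma weq_refl a : weq a a.
Proof. exact: rst_refl. Qed.

Lemma weq_sym a b : weq a b -> weq b a.
Proof. exact: rst_sym. Qed.

Lemma weq_trans a b c : weq a b -> weq b c -> weq a c.
Proof. exact: rst_trans. Qed.

Lemma weq_catl c a b : weq a b -> weq (c ++ a) (c ++ b).
Proof.
elim=> [x y H|x|x y _ H|x y z _ H1 _ H2].
- exact/rst_step/step_catl.
- exact: weq_refl.
- exact: weq_sym.
- exact: weq_trans H1 H2.
Qed.

Lemma weq_catr c a b : weq a b -> weq (a ++ c) (b ++ c).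
Proof.
elim=> [x y H|x|x y _ H|x y z _ H1 _ H2].
- exact/rst_step/step_catr.
- exact: weq_refl.
- exact: weq_sym.
- exact: weq_trans H1 H2.
Qed.

Lemma weq_cat a b c d : weq a b -> weq c d -> weq (a ++ c) (b ++ d).
Proof. by move=> H1 H2; apply: weq_trans (weq_catr c H1) (weq_catl b H2). Qed.

Lemma cat_cons_eq (u u' r r' : word) x y :
  u ++ x :: r = u' ++ y :: r' ->
  [\/ [/\ u = u', x = y & r = r'],
      exists s, u' = u ++ x :: s /\ r = s ++ y :: r' |
      exists s, u = u' ++ y :: s /\ r' = s ++ x :: r].
Proof.
elim: u u' => [|z u IH] [|z' u'] /=.
- by case=> -> ->; apply: Or31.
- by case=> -> ->; apply: Or32; exists u'.
- by case=> -> <-; apply: Or33; exists u.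
- case=> -> /IH [[-> -> ->]|[s [-> ->]]|[s [-> ->]]].
  + exact: Or31.
  + by apply: Or32; exists s.
  + by apply: Or33; exists s.
Qed.

Definition cancel1 (w w' : word) : Prop :=
  exists u m v a b, all (commutes a) m /\
    w = u ++ (a, b) :: m ++ (a, ~~ b) :: v /\ w' = u ++ m ++ v.

Lemma cancel1_size w w' : cancel1 w w' -> size w = (size w').+2.
Proof.
case=> [u [m [v [a [b [_ [-> ->]]]]]]].
by rewrite !size_cat /= size_cat /= !addnS.
Qed.

Lemma cancel1_weq w w' : cancel1 w w' -> weq w w'.
Proof.
case=> [u [m [v [a [b [H [-> ->]]]]]]].
apply: weq_catl.
apply: (weq_trans (shuffle_weq (@shuffle_move (a, b) m ((a, ~~ b) :: v) H))).
exact/weq_catl/rst_step/(step_cancel e [::] v a b).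
Qed.

Ltac norm_cat := rewrite -?catA /= ?negbK -?catA /=.

Ltac split_all := repeat match goal with
  | H : is_true (all _ (_ ++ _)) |- _ => rewrite all_cat in H
  | H : is_true (all _ (_ :: _)) |- _ => rewrite /= in H
  | H : is_true (_ && _) |- _ => case/andP: H => ? ?
  end; rewrite ?all_cat /= ?andbT; repeat (apply/andP; split); try assumption.

Lemma cancel1_swap u v x y w1 : ~~ e x.1 y.1 -> cancel1 (u ++ x :: y :: v) w1 ->
  exists2 w2, cancel1 (u ++ y :: x :: v) w2 & shuffle w1 w2.
Proof.
move=> Hxy [p [m [q [a [b [Hm [E ->]]]]]]].
case/cat_cons_eq: E => [[Eu Ex E]|[s [Ep E]]|[s [Eu E]]].
- subst u x; case: m Hm E => [|z m'] Hm /= [Ey Ev]; subst y v.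
  + exists (p ++ q); last exact: shuffle_refl.
    by exists p, [::], q, a, (~~ b); norm_cat.
  + exists (p ++ z :: m' ++ q); last exact: shuffle_refl.
    by exists (p ++ [:: z]), m', q, a, b; split; [split_all | split; norm_cat].
- subst p; case: s E => [|z s'] /= [Ey Ev]; subst y v.
  + exists (u ++ x :: m ++ q); last by norm_cat; exact: shuffle_refl.
    exists u, (x :: m), q, a, b; split; last by split; norm_cat.
    by rewrite /= Hm andbT /commutes e_sym.
  + exists (u ++ z :: x :: s' ++ m ++ q).
    * by exists (u ++ z :: x :: s'), m, q, a, b; split=> //; split; norm_cat.
    * by norm_cat; apply: shuffle_swap.
- subst u; case/cat_cons_eq: E => [[Em Ex Eq]|[s0 [Es Eq]]|[s0 [Em E]]].
  + subst s x q; exists (p ++ m ++ y :: v); last exact: shuffle_refl.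
    by exists p, (m ++ [:: y]), v, a, b; split; [split_all | split; norm_cat].
  + subst s q; exists (p ++ m ++ s0 ++ y :: x :: v).
    * by exists p, m, (s0 ++ y :: x :: v), a, b; split=> //; split; norm_cat.
    * by rewrite !catA; apply: shuffle_swap.
  + subst m; case: s0 E Hm => [|z s1] /= [Ey Ev] Hm; subst y v.
    * exists (p ++ s ++ x :: q); last by norm_cat; exact: shuffle_refl.
      by exists p, s, (x :: q), a, b; split; [split_all | split; norm_cat].
    * exists (p ++ s ++ z :: x :: s1 ++ q).
      -- by exists p, (s ++ z :: x :: s1), q, a, b; split; [split_all | split; norm_cat].
      -- by norm_cat; rewrite !catA; apply: shuffle_swap.
Qed.

Lemma cancel1_shuffle w w' w1 : shuffle w w' -> cancel1 w w1 ->
  exists2 w2, cancel1 w' w2 & shuffle w1 w2.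
Proof.
move=> H; elim: H w1 => [w0|u v x y Hxy|a0 b0 c0 _ IH1 _ IH2] w1 R.
- by exists w1 => //; exact: shuffle_refl.
- exact: cancel1_swap Hxy R.
- case: (IH1 _ R) => w2 R2 S2; case: (IH2 _ R2) => w3 R3 S3.
  by exists w3 => //; exact: shuffle_trans S2 S3.
Qed.

Definition joinable w1 w2 := shuffle w1 w2 \/ exists w3, cancel1 w1 w3 /\ cancel1 w2 w3.

Lemma joinable_sym w1 w2 : joinable w1 w2 -> joinable w2 w1.
Proof.
case=> [H|[w3 [H1 H2]]]; [left; exact: shuffle_sym | right; by exists w3].
Qed.

Lemma cancel1_overlap u1 m1 v1 a b s c d m2 v2 :
  all (commutes a) m1 -> all (commutes c) m2 ->
  m1 ++ (a, ~~ b) :: v1 = s ++ (c, d) :: m2 ++ (c, ~~ d) :: v2 ->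
  joinable (u1 ++ m1 ++ v1) ((u1 ++ (a, b) :: s) ++ m2 ++ v2).
Proof.
move=> Hm1 Hm2.
case/cat_cons_eq => [[Em [Ec Ed] Ev]|[s' [Es Ev]]|[s'' [Em E]]].
- subst s v1 c d; left; apply: shuffle_sym; norm_cat.
  apply: shuffle_catl; move: (@shuffle_move (a, b) (m1 ++ m2) v2).
  by rewrite -?catA; apply; split_all.
- subst s v1; right; exists (u1 ++ m1 ++ s' ++ m2 ++ v2); split.
  + by exists (u1 ++ m1 ++ s'), m2, v2, c, d; split=> //; split; norm_cat.
  + by exists u1, m1, (s' ++ m2 ++ v2), a, b; split=> //; split; norm_cat.
- subst m1; case/cat_cons_eq: E => [[Em [Ec /negb_inj Ed] Ev]|[s3 [Es Ev]]|[s4 [Em Ev]]].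
  + subst s'' c d v2; left; norm_cat; apply/shuffle_catl/shuffle_sym.
    by move: (@shuffle_move (a, b) s (m2 ++ v1)); rewrite -?catA; apply; split_all.
  + subst s'' v2; right; exists (u1 ++ s ++ m2 ++ s3 ++ v1); split.
    * by exists (u1 ++ s), m2, (s3 ++ v1), c, d; split=> //; split; norm_cat.
    * by exists u1, (s ++ m2 ++ s3), v1, a, b; split; [split_all | split; norm_cat].
  + subst m2 v1; right; exists (u1 ++ s ++ s'' ++ s4 ++ v2); split.
    * by exists (u1 ++ s), (s'' ++ s4), v2, c, d; split; [split_all | split; norm_cat].
    * by exists u1, (s ++ s''), (s4 ++ v2), a, b; split; [split_all | split; norm_cat].
Qed.

Lemma cancel1_local_confluence w w1 w2 : cancel1 w w1 -> cancel1 w w2 -> joinable w1 w2.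
Proof.
move=> [u1 [m1 [v1 [a [b [Hm1 [-> ->]]]]]]] [u2 [m2 [v2 [c [d [Hm2 [E ->]]]]]]].
case/cat_cons_eq: E => [[Eu [Ec Ed] E]|[s [Eu E]]|[s [Eu E]]].
- subst u2 c d; case/cat_cons_eq: E => [[Em _ Ev]|[s [Em Ev]]|[s [Em Ev]]].
  + by subst; left; exact: shuffle_refl.
  + subst m2 v1; left; norm_cat; apply/shuffle_catl/shuffle_catl/shuffle_sym.
    by move: (@shuffle_move (a, ~~ b) s v2); rewrite -?catA; apply; split_all.
  + subst m1 v2; left; norm_cat; apply/shuffle_catl/shuffle_catl.
    by move: (@shuffle_move (a, ~~ b) s v1); rewrite -?catA; apply; split_all.
- subst u2; exact: cancel1_overlap Hm1 Hm2 E.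
- subst u1; apply: joinable_sym; exact: cancel1_overlap Hm2 Hm1 E.
Qed.

Local Notation reduces := (clos_refl_trans_1n word cancel1).
#[local] Arguments rt1n_trans {A R x y z}.

Definition irreducible (w : word) := forall w', ~ cancel1 w w'.

Definition normal_form w z := reduces w z /\ irreducible z.

Lemma reduces_size w z : reduces w z -> size z <= size w.
Proof. by elim=> // w0 w1 w2 /cancel1_size -> _; lia. Qed.

Lemma reduces_weq w z : reduces w z -> weq w z.
Proof.
elim=> [|w0 w1 w2 R _ IH]; first exact: weq_refl.
exact: weq_trans (cancel1_weq R) IH.
Qed.

Lemma reduces_irreducible w z : irreducible w -> reduces w z -> z = w.
Proof. by move=> Iw H; case: H Iw => // w1 z0 R _ Iw; case: (Iw _ R). Qed.

Lemma irreducible_shuffle w w' : shuffle w w' -> irreducible w -> irreducible w'.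
Proof.
move=> H Iw w1 R; case: (cancel1_shuffle (shuffle_sym H) R) => w2 R2 _; exact: Iw R2.
Qed.

Lemma normal_form_exists w : exists z, normal_form w z.
Proof.
move: {2}(size w) (leqnn (size w)) => n.
elim: n w => [|n IH] w Hn.
- exists w; split; first exact: rt1n_refl.
  by move=> w' /cancel1_size; move: Hn; case: w.
- case: (classic (exists w', cancel1 w w')) => [[w' R]|N].
  + case: (IH w') => [|z [Rz Iz]]; first by move: (cancel1_size R); lia.
    by exists z; split=> //; exact: rt1n_trans R Rz.
  + exists w; split; first exact: rt1n_refl.
    by move=> w' R; apply: N; exists w'.
Qed.

(* Newman's lemma modulo shuffling, by induction on the length. *)
Lemma normal_form_shuffle w w' z z' : shuffle w w' ->
  normal_form w z -> normal_form w' z' -> shuffle z z'.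
Proof.
move: {2}(size w) (leqnn (size w)) => n.
elim: n w w' z z' => [|n IH] w w' z z' Hn H [Rz Iz] [Rz' Iz'].
  have Iw : irreducible w by move=> w1 /cancel1_size; move: Hn; case: (w).
  by rewrite (reduces_irreducible Iw Rz) (reduces_irreducible (irreducible_shuffle H Iw) Rz').
case: (classic (irreducible w)) => Iw.
  by rewrite (reduces_irreducible Iw Rz) (reduces_irreducible (irreducible_shuffle H Iw) Rz').
have Iw' : ~ irreducible w' by move/(irreducible_shuffle (shuffle_sym H)).
case: Rz Iz Iw Hn H => [Iz0 Iw|w1 z0 R1 Rz1 Iz0 _ Hn H]; first by case: (Iw Iz0).
case: Rz' Iz' Iw' H => [Iz0' Iw'|w1' z0' R1' Rz1' Iz0' _ H]; first by case: (Iw' Iz0').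
have S1 := cancel1_size R1; have S1' := cancel1_size R1'.
have Ss := perm_size (shuffle_perm H).
case: (cancel1_shuffle H R1) => w2 R2 S2.
have Hn1 : size w1 <= n by lia.
have Hn1' : size w1' <= n by move: Hn; rewrite Ss S1' ltnS => /ltnW.
case: (cancel1_local_confluence R1' R2) => [S3|[w3 [R3 R4]]].
  exact: IH Hn1 (shuffle_trans S2 (shuffle_sym S3)) (conj Rz1 Iz0) (conj Rz1' Iz0').
case: (normal_form_exists w3) => z3 [Rz3 Iz3].
have A1 := IH _ _ _ _ Hn1 S2 (conj Rz1 Iz0) (conj (rt1n_trans R4 Rz3) Iz3).
have A2 := IH _ _ _ _ Hn1' (shuffle_refl _) (conj Rz1' Iz0') (conj (rt1n_trans R3 Rz3) Iz3).
exact: shuffle_trans A1 (shuffle_sym A2).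
Qed.

Lemma normal_form_weq w w' z z' : weq w w' ->
  normal_form w z -> normal_form w' z' -> shuffle z z'.
Proof.
move=> H; elim: H z z' => [x y H|x|x y _ IH|x y v _ IH1 _ IH2] z z' N N'.
- move: N N'; case: H => [u v a b|u v x0 y0 Hxy] N N'; last first.
    exact: normal_form_shuffle (shuffle_swap _ _ Hxy) N N'.
  apply: (normal_form_shuffle (shuffle_refl _) N); case: N' => R I; split=> //.
  by apply: rt1n_trans R; exists u, [::], v, a, b.
- exact: normal_form_shuffle (shuffle_refl _) N N'.
- exact: shuffle_sym (IH _ _ N' N).
- case: (normal_form_exists y) => zy Ny.
  exact: shuffle_trans (IH1 _ _ N Ny) (IH2 _ _ Ny N').
Qed.

Lemma weq_irreducible_shuffle w w' :
  weq w w' -> irreducible w -> irreducible w' -> shuffle w w'.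
Proof. by move=> H I I'; apply: normal_form_weq H _ _; split=> //; exact: rt1n_refl. Qed.

Lemma reducedE w : reduced e w <-> irreducible w.
Proof.
split=> [Hr w' R | I w' H].
  by have := Hr _ (cancel1_weq R); rewrite (cancel1_size R); lia.
case: (normal_form_exists w') => z [Rz Iz].
have S := weq_irreducible_shuffle (weq_trans H (reduces_weq Rz)) I Iz.
by rewrite (perm_size (shuffle_perm S)); exact: reduces_size Rz.
Qed.

Lemma irreducible_of_size w z : weq w z -> irreducible z -> size w <= size z -> irreducible w.
Proof.
move=> H Iz Hs w' R.
have := (reducedE z).2 Iz w' (weq_trans (weq_sym H) (cancel1_weq R)).
by rewrite (cancel1_size R) in Hs; lia.
Qed.

Lemma irreducible_catl u v : irreducible (u ++ v) -> irreducible u.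
Proof.
move=> I u' [p [m [q [a [b [Hm [Eu Eu']]]]]]]; subst u u'; apply: (I (p ++ m ++ q ++ v)).
by exists p, m, (q ++ v), a, b; split=> //; split; norm_cat.
Qed.

Lemma irreducible_catr u v : irreducible (u ++ v) -> irreducible v.
Proof.
move=> I v' [p [m [q [a [b [Hm [Ev Ev']]]]]]]; subst v v'; apply: (I (u ++ p ++ m ++ q)).
by exists (u ++ p), m, q, a, b; split=> //; split; norm_cat.
Qed.

Lemma irreducible_letter x : irreducible [:: x].
Proof. by move=> w' /cancel1_size. Qed.

Lemma len_of_irreducible w z : weq w z -> irreducible z -> len_of e w (size z).
Proof.
move=> H I; split; first by exists z.
by move=> w' H'; apply: ((reducedE z).2 I); exact: weq_trans (weq_sym H) H'.
Qed.

Lemma len_of_unique w n m : len_of e w n -> len_of e w m -> n = m.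
Proof. by move=> [[w1 [H1 <-]] L1] [[w2 [H2 <-]] L2]; have := L1 _ H2; have := L2 _ H1; lia. Qed.

Lemma irreducible_rep w : exists z, [/\ weq w z, irreducible z & len_of e w (size z)].
Proof.
case: (normal_form_exists w) => z [Rz Iz]; exists z.
by split=> //; [exact: reduces_weq | apply: len_of_irreducible => //; exact: reduces_weq].
Qed.

Lemma len_of_weq a b n : weq a b -> len_of e a n -> len_of e b n.
Proof.
move=> H [[w [H1 S1]] L]; split.
- by exists w; split=> //; exact: weq_trans (weq_sym H) H1.
- by move=> w' H'; apply: L; exact: weq_trans H H'.
Qed.

Lemma in_suppE g z v : weq g z -> irreducible z -> (in_supp e g v <-> v \in map fst z).
Proof.
move=> H I; split=> [[w [Hw [Rw Vw]]] | V].
  have S := weq_irreducible_shuffle (weq_trans (weq_sym Hw) H) ((reducedE w).1 Rw) I.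
  by rewrite -(perm_mem (perm_map fst (shuffle_perm S))).
by exists z; split=> //; split=> //; exact/(reducedE z).2.
Qed.

Lemma in_supp_weq a b v : weq a b -> in_supp e a v -> in_supp e b v.
Proof. by move=> H [w [Hw R]]; exists w; split=> //; exact: weq_trans (weq_sym H) Hw. Qed.

(* The vertices of the letters that can be shuffled to the front of [w];
   for reduced [w] this is S(w). *)
Fixpoint front (w : word) : seq T :=
  if w is x :: w' then x.1 :: [seq y <- front w' | ~~ e x.1 y] else [::].

Lemma front_cons x s u :
  (u \in front (x :: s)) = (u == x.1) || ((u \in front s) && ~~ e x.1 u).
Proof. by rewrite /= in_cons mem_filter andbC. Qed.

Lemma front_catl p s s' : front s =i front s' -> front (p ++ s) =i front (p ++ s').
Proof. by move=> H; elim: p => [|x p IH] u //=; rewrite !in_cons !mem_filter IH. Qed.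

Lemma front_shuffle w w' : shuffle w w' -> front w =i front w'.
Proof.
elim=> [w0|p v x y Hxy|a b c _ H1 _ H2] u //; last by rewrite H1 H2.
apply: front_catl => {}u; rewrite !front_cons.
case: (u =P x.1) => [->|Nx]; case: (u =P y.1) => [Ey|Ny] /=.
- by rewrite e_sym Hxy orbT.
- by rewrite e_sym Hxy orbT.
- by subst u; rewrite Hxy.
- by rewrite andbAC.
Qed.

Lemma front_move u w : u \in front w -> exists b h, shuffle w ((u, b) :: h).
Proof.
elim: w => [|x w IH] //; rewrite front_cons; case/orP => [/eqP ->|/andP [Hu He]].
  by exists x.2, w; case: x => ? ?; exact: shuffle_refl.
case: (IH Hu) => b [h S]; exists b, (x :: h).
exact: shuffle_trans (shuffle_cons x S) (@shuffle_swap [::] h x (u, b) He).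
Qed.

Lemma front_all q y : y \in map fst q -> (forall z, z \in map fst q -> ~~ e z y) ->
  y \in front q.
Proof.
elim: q => [|x q IH] //= Hy Hz; rewrite in_cons mem_filter.
case/orP: Hy => [->|Hy] //; rewrite IH //.
- by rewrite Hz ?orbT // in_cons eqxx.
- by move=> z Hz'; apply: Hz; rewrite in_cons Hz' orbT.
Qed.

Lemma front_rcons q x y : y \in front (rcons q x) ->
  y \in front q \/ (y = x.1 /\ forall z, z \in map fst q -> ~~ e z y).
Proof.
elim: q => [|z q IH] /=; first by rewrite mem_seq1 => /eqP ->; right.
rewrite !in_cons !mem_filter; case/orP => [/eqP ->|/andP [He Hy]].
  by left; rewrite eqxx.
case: (IH Hy) => [H|[Ey Hz]]; first by left; rewrite He H orbT.
right; split=> // z0; rewrite in_cons; case/orP => [/eqP -> //|]; exact: Hz.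
Qed.

Lemma in_SE w u : irreducible w -> (in_S e w u <-> u \in front w).
Proof.
move=> Iw; split=> [[b [h [Hw [nt [np [Lt [Lp Lg]]]]]]] | /front_move [b [h S]]].
  have Ent := len_of_unique Lt (len_of_irreducible (weq_refl _) (@irreducible_letter (u, b))).
  case: (irreducible_rep h) => h' [Hh Ih Lh'].
  have Enp := len_of_unique Lp Lh'.
  have Hz : weq w ((u, b) :: h') := weq_trans Hw (weq_catl [:: (u, b)] Hh).
  have Ew := len_of_unique Lg (len_of_irreducible (weq_refl w) Iw).
  have Iz : irreducible ((u, b) :: h').
    by apply: (irreducible_of_size (weq_sym Hz) Iw); rewrite -Ew Ent Enp.
  by rewrite (front_shuffle (weq_irreducible_shuffle Hz Iw Iz)) front_cons eqxx.
have Iz := irreducible_shuffle S Iw.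
have Ih : irreducible h := irreducible_catr (u := [:: (u, b)]) Iz.
exists b, h; split; first exact: shuffle_weq S.
exists 1, (size h); split.
  exact: (len_of_irreducible (weq_refl _) (@irreducible_letter (u, b))).
split; first exact: len_of_irreducible (weq_refl _) Ih.
exact: len_of_irreducible (shuffle_weq S) Iz.
Qed.

Definition conicalb v w := (v \in front w) && all (pred1 v) (front w).

Lemma conicalE w v : irreducible w -> (conical e v w <-> conicalb v w).
Proof.
move=> Iw; split=> [H | /andP [Hv /allP Ha] u].
  apply/andP; split; first exact/(in_SE _ Iw)/(H v).2.
  by apply/allP => u /(in_SE _ Iw)/H /eqP.
by rewrite in_SE //; split=> [/Ha/eqP | ->].
Qed.

Lemma conicalb_shuffle v w w' : shuffle w w' -> conicalb v w = conicalb v w'.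
Proof. by move=> S; rewrite /conicalb (front_shuffle S v) (eq_all_r (front_shuffle S)). Qed.

Lemma in_S_weq a b u : weq a b -> in_S e a u -> in_S e b u.
Proof.
move=> H [c [h [Hw [nt [np [L1 [L2 L3]]]]]]]; exists c, h; split.
  exact: weq_trans (weq_sym H) Hw.
by exists nt, np; do 2!split=> //; exact: len_of_weq H L3.
Qed.

Lemma conical_weq a b v : weq a b -> conical e v a -> conical e v b.
Proof.
move=> H C u; split=> [Hu | E]; first exact: (C u).1 (in_S_weq (weq_sym H) Hu).
exact/(in_S_weq H)/(C u).2.
Qed.

Definition blocked v (q : word) (x : T * bool) :=
  (x.1 == v) || has (fun y => e y x.1 || (y == x.1)) (map fst q).

(* [cone v q w = (t, p)]: scanning [w], a letter is put in [p] when it is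
   [blocked] by [v] or by the letters of [q ++ p] met so far; the letters of
   [t] commute with all of those, so [q ++ w] shuffles to [t ++ q ++ p].
   With [q = [::]] this is the decomposition [w = t p] with [p] v-conical. *)
Fixpoint cone v (q : word) (w : word) : word * word :=
  match w with
  | [::] => ([::], [::])
  | x :: w' => if blocked v q x then let r := cone v (rcons q x) w' in (r.1, x :: r.2)
               else let r := cone v q w' in (x :: r.1, r.2)
  end.

Lemma cone_shuffle v q w : shuffle (q ++ w) ((cone v q w).1 ++ q ++ (cone v q w).2).
Proof.
elim: w q => [|x w IH] q /=; first by rewrite cats0; exact: shuffle_refl.
case: ifP => Hx /=; first by rewrite -cat_rcons -[q ++ x :: _]cat_rcons; exact: IH.
have Hq : all (commutes x.1) q.
  apply/allP => y Hy; rewrite /commutes e_sym.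
  move/negbT: Hx; rewrite negb_or => /andP [_ /hasPn H].
  by have := H _ (map_f fst Hy); rewrite negb_or => /andP [].
exact: shuffle_trans (shuffle_sym (@shuffle_move x q w Hq)) (shuffle_cons x (IH q)).
Qed.

Lemma cone_t_notin v q w : v \notin map fst (cone v q w).1.
Proof.
elim: w q => [|x w IH] q //=; case: ifP => Hx //=.
rewrite in_cons negb_or IH andbT; apply/negP => /eqP E.
by move: Hx; rewrite /blocked -E eqxx.
Qed.

Lemma cone_p_nonempty v q w : v \in map fst w -> 0 < size (cone v q w).2.
Proof.
elim: w q => [|x w IH] q //=; rewrite in_cons; case: ifP => Hx //= /orP [/eqP E|Hv].
- by move: Hx; rewrite /blocked -E eqxx.
- exact: IH.
Qed.

Lemma cone_p_head v w x p : (cone v [::] w).2 = x :: p -> x.1 = v.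
Proof.
elim: w => [|y w IH] //=; rewrite /blocked /=; case: ifP => Hy /=; last exact: IH.
by rewrite orbF in Hy; case=> <- _; apply/eqP.
Qed.

Lemma cone_p_front v q w : all (pred1 v) (front q) ->
  all (pred1 v) (front (q ++ (cone v q w).2)).
Proof.
elim: w q => [|x w IH] q /=; first by rewrite cats0.
case: ifP => Hx /= Hq; last exact: IH.
rewrite -cat_rcons; apply: IH; apply/allP => y /front_rcons [Hy|[Ey Hz]].
  exact: (allP Hq).
subst y; case/orP: Hx => [//|/hasP [y Hy /orP [He|/eqP Ey]]].
  by have := Hz _ Hy; rewrite He.
by subst y; apply: (allP Hq); exact: front_all.
Qed.

Lemma conicalb_cone_p v w : v \in map fst w -> conicalb v (cone v [::] w).2.
Proof.
move=> Hv; rewrite /conicalb.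
have := cone_p_nonempty [::] Hv; case E: (cone v [::] w).2 => [|x p] // _.
rewrite front_cons (cone_p_head E) eqxx /=.
by have := @cone_p_front v [::] w isT; rewrite /= E.
Qed.

Lemma conicalb_cone_t_nil v w : v \in map fst w -> (cone v [::] w).1 = [::] -> conicalb v w.
Proof.
move=> Hv Ht; have S := cone_shuffle v [::] w; rewrite Ht /= in S.
by rewrite (conicalb_shuffle v S); exact: conicalb_cone_p.
Qed.

Lemma cone_idem v q w : cone v q (cone v q w).2 = ([::], (cone v q w).2).
Proof.
elim: w q => [|x w IH] q //=; case: ifP => Hx /=; last exact: IH.
by rewrite Hx IH.
Qed.

Lemma cone_cat v q a b : cone v q (a ++ b) =
  ((cone v q a).1 ++ (cone v (q ++ (cone v q a).2) b).1,
   (cone v q a).2 ++ (cone v (q ++ (cone v q a).2) b).2).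
Proof.
elim: a q => [|x a IH] q /=; first by rewrite cats0; case: (cone v q b).
by case: ifP => Hx /=; rewrite IH // -?cat_rcons.
Qed.

Lemma cone_p_nil v q w : (cone v q w).2 = [::] -> all (predC (blocked v q)) w.
Proof. by elim: w q => [|x w IH] q //=; case: ifP => Hx //= H; rewrite IH. Qed.

Definition rotate v w := (cone v [::] w).2 ++ (cone v [::] w).1.

Lemma path_crosses (A : pred T) x s : path e x s -> A x -> ~~ A (last x s) ->
  exists a b, [/\ A a, ~~ A b, e a b & b \in s].
Proof.
elim: s x => [|y s IH] x /=; first by move=> _ ->.
case/andP => Hxy Hp Ax Hl; case Ay: (A y).
  by case: (IH y Hp Ay Hl) => a [b [Aa Ab Hab Hb]]; exists a, b; rewrite in_cons Hb orbT.
by exists x, y; rewrite Ay in_cons eqxx.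
Qed.

Lemma connected_in_eq (P Q : T -> Prop) : (forall u, P u <-> Q u) ->
  connected_in e P -> connected_in e Q.
Proof.
move=> E [[x Hx] Hc]; split; first by exists x; apply/E.
move=> x0 y0 /E Hx0 /E Hy0; case: (Hc _ _ Hx0 Hy0) => s [Ps [Ls Ss]].
by exists s; split=> //; split=> // z /Ss /E.
Qed.

(* Rotating a non-conical word with connected support moves into [p] some
   vertex of [t] adjacent to [p]. *)
Lemma cone_p_grows v w : v \in map fst w -> connected_in e (fun u => u \in map fst w) ->
  ~~ conicalb v w -> size (cone v [::] w).2 < size (cone v [::] (rotate v w)).2.
Proof.
move=> Hv [_ Hc] Ncb; rewrite /rotate cone_cat cone_idem /= size_cat -[X in X < _]addn0 ltn_add2l.
rewrite lt0n size_eq0; apply/negP => /eqP /cone_p_nil Emp.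
set t := (cone v [::] w).1 in Emp *; set p := (cone v [::] w).2 in Emp *.
have S := cone_shuffle v [::] w; rewrite /= -/t -/p in S.
have Hmem u : (u \in map fst w) = (u \in map fst t) || (u \in map fst p).
  by rewrite (perm_mem (perm_map fst (shuffle_perm S))) map_cat mem_cat.
have unblocked x : x \in t -> forall y, y \in map fst p -> ~~ e y x.1 && (y != x.1).
  move=> Hx y Hy; have := allP Emp x Hx; rewrite /= /blocked negb_or => /andP [_ /hasPn H].
  by have := H _ Hy; rewrite negb_or.
case Et: t => [|x t']; first by rewrite (conicalb_cone_t_nil Hv Et) in Ncb.
have Hx : x \in t by rewrite Et mem_head.
have Hvp : v \in map fst p.
  have := cone_p_nonempty [::] Hv; rewrite -/p; case Ep: p => [|y p'] // _.
  by rewrite /= in_cons (cone_p_head Ep) eqxx.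
case: (Hc v x.1 Hv); first by rewrite Hmem (map_f fst Hx).
move=> s [Ps [Ls Ss]].
have Nx : x.1 \notin map fst p by apply/negP => /(unblocked x Hx) /andP [_]; rewrite eqxx.
have Nl : last v s \notin map fst p by rewrite Ls.
have [a [b [Aa Ab Hab Hb]]] := @path_crosses (mem (map fst p)) _ _ Ps Hvp Nl.
have := Ss _ Hb; rewrite Hmem (negbTE (Ab : b \notin map fst p)) orbF => /mapP [x' Hx' Eb].
by have := unblocked x' Hx' a Aa; rewrite -Eb Hab.
Qed.

Lemma rotate_perm v w : perm_eq (rotate v w) w.
Proof. by rewrite perm_catC perm_sym; exact: shuffle_perm (cone_shuffle v [::] w). Qed.

Lemma iter_rotate_perm v w i : perm_eq (iter i (rotate v) w) w.
Proof. by elim: i => //= i IH; exact: perm_trans (rotate_perm v _) IH. Qed.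

Lemma iter_rotate_conicalb v w : v \in map fst w ->
  connected_in e (fun u => u \in map fst w) -> exists k, conicalb v (iter k (rotate v) w).
Proof.
move=> Hv Hc; apply: NNPP => N.
have Hmem i u : (u \in map fst (iter i (rotate v) w)) = (u \in map fst w).
  exact: perm_mem (perm_map fst (iter_rotate_perm v w i)) u.
have Hgrow i : i < size (cone v [::] (iter i (rotate v) w)).2.
  elim: i => [|i IH]; first exact: cone_p_nonempty.
  apply: leq_ltn_trans IH (cone_p_grows _ _ _); first by rewrite Hmem.
    by apply: connected_in_eq Hc => u; rewrite Hmem.
  by apply/negP => Hi; apply: N; exists i.
have := Hgrow (size w); rewrite ltnNge => /negP; apply.
set w' := iter _ _ _; have Hs : size w' = size w := perm_size (iter_rotate_perm v w _).
have /= E := perm_size (shuffle_perm (cone_shuffle v [::] w')).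
by rewrite -Hs E size_cat leq_addl.
Qed.

Lemma winv_cat (a b : word) : winv (a ++ b) = winv b ++ winv a.
Proof. by rewrite /winv map_cat rev_cat. Qed.

Lemma winv_cancel t : weq (winv t ++ t) [::].
Proof.
elim: t => [|[a b] t IH]; first exact: weq_refl.
rewrite -[(a, b) :: t]/([:: (a, b)] ++ t) winv_cat -catA /=.
have H : weq (winv t ++ [:: (a, ~~ b); (a, ~~ ~~ b)] ++ t) (winv t ++ t).
  exact/rst_step/step_cancel.
by rewrite negbK /= in H; exact: weq_trans H IH.
Qed.

Definition conj_of (g w : word) := exists c, weq w (winv c ++ g ++ c).

Lemma weq_rotate a t p : weq a (t ++ p) -> weq (p ++ t) (winv t ++ a ++ t).
Proof.
move=> H; apply: weq_sym; apply: weq_trans (weq_catl (winv t) (weq_catr t H)) _.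
rewrite -catA catA -[X in weq _ X]cat0s.
exact/weq_catr/winv_cancel.
Qed.

Lemma conj_of_rotate g w t p : conj_of g w -> weq w (t ++ p) -> conj_of g (p ++ t).
Proof.
move=> [c Hc] Hd; exists (c ++ t); apply: weq_trans (weq_rotate Hd) _.
by rewrite winv_cat -!catA; apply: weq_catl; move: (weq_catr t Hc); rewrite -!catA.
Qed.

Lemma cyc_red_conj_of g n w : cyc_red e g -> len_of e g n -> conj_of g w ->
  size w <= n -> irreducible w /\ size w = n.
Proof.
move=> Cg Lg [c H] Hs; case: (irreducible_rep w) => z [Hz Iz Lz].
have := Cg c n (size z) Lg (len_of_weq H Lz); have := Lz.2 w (weq_refl w) => H1 H2.
by split; [apply: (irreducible_of_size Hz Iz); lia | lia].
Qed.

Lemma iter_rotate_conj g w v : cyc_red e g -> weq g w -> irreducible w ->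
  forall i, irreducible (iter i (rotate v) w) /\ conj_of g (iter i (rotate v) w).
Proof.
move=> Cg Hw Iw; elim=> [|i [_ Ci]].
  by split=> //; exists [::]; rewrite /= cats0; exact: weq_sym.
have Ci' := conj_of_rotate Ci (shuffle_weq (cone_shuffle v [::] _)).
split=> //; apply: (cyc_red_conj_of Cg (len_of_irreducible Hw Iw) Ci' _).1.
by rewrite (perm_size (iter_rotate_perm v w i.+1)).
Qed.

Lemma gdec_irreducible w t p : weq w (t ++ p) -> irreducible (t ++ p) -> gdec e w t p.
Proof.
move=> H I; split=> //; exists (size t), (size p); split.
  exact: len_of_irreducible (weq_refl _) (irreducible_catl I).
split; first exact: len_of_irreducible (weq_refl _) (irreducible_catr I).
by rewrite -size_cat; exact: len_of_irreducible H I.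
Qed.

Lemma conical_conj_exists g v : cyc_red e g -> non_split e g -> in_supp e g v ->
  exists h, conical_conj e v g h.
Proof.
move=> Cg [_ Hcon] Hv; case: (irreducible_rep g) => w [Hw Iw _].
have Hsupp u : in_supp e g u <-> u \in map fst w := in_suppE u Hw Iw.
have Hvw : v \in map fst w by exact/Hsupp.
have Hcw : connected_in e (fun u => u \in map fst w).
  by apply: connected_in_eq (conj (ex_intro _ v Hv) Hcon) => u; exact: Hsupp.
have [k Hk Hmin] := ex_minnP (iter_rotate_conicalb Hvw Hcw).
have Hvi i : v \in map fst (iter i (rotate v) w).
  by rewrite (perm_mem (perm_map fst (iter_rotate_perm v w i))); exact/Hsupp.
pose gs i := iter i (rotate v) w.
exists (gs k), k, gs; split; first exact: weq_sym.
split; last first.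
  by split; [exact/(conicalE _ (iter_rotate_conj v Cg Hw Iw k).1) | exact: weq_refl].
move=> i Hi; have [Ii _] := iter_rotate_conj v Cg Hw Iw i.
split; first by move/(conicalE _ Ii)/Hmin; lia.
have S := cone_shuffle v [::] (gs i); rewrite /= in S.
have Itp := irreducible_shuffle S Ii.
exists (cone v [::] (gs i)).1, (cone v [::] (gs i)).2.
split; first exact: gdec_irreducible (shuffle_weq S) Itp.
split; first exact/(conicalE _ (irreducible_catr Itp))/conicalb_cone_p/Hvi.
split; last exact: weq_refl.
by move/(in_suppE v (weq_refl _) (irreducible_catl Itp)); apply/negP; exact: cone_t_notin.
Qed.

Lemma gdec_rotate g n w t p w' : cyc_red e g -> len_of e g n ->
  conj_of g w -> len_of e w n -> gdec e w t p -> weq w' (p ++ t) ->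
  [/\ conj_of g w', len_of e w' n & forall u, in_supp e w' u <-> in_supp e w u].
Proof.
move=> Cg Lg Cw Lw [Hd [nt [np [Lt [Lp Lw']]]]] Hn.
have Enn := len_of_unique Lw' Lw.
case: (irreducible_rep t) => t' [Ht It Lt']; have Et := len_of_unique Lt Lt'.
case: (irreducible_rep p) => p' [Hp Ip Lp']; have Ep := len_of_unique Lp Lp'.
have Hd' : weq w (t' ++ p') := weq_trans Hd (weq_cat Ht Hp).
have Hn' : weq w' (p' ++ t') := weq_trans Hn (weq_cat Hp Ht).
have Cpt := conj_of_rotate Cw Hd'.
have [Ipt Spt] : irreducible (p' ++ t') /\ size (p' ++ t') = n.
  by apply: (cyc_red_conj_of Cg Lg Cpt); rewrite size_cat; lia.
case: (irreducible_rep w) => z [Hz Iz Lz]; have Ez := len_of_unique Lw Lz.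
have Itp : irreducible (t' ++ p').
  by apply: (irreducible_of_size (weq_trans (weq_sym Hd') Hz) Iz); rewrite size_cat; lia.
have [c Hc] := Cpt; split.
- by exists c; exact: weq_trans Hn' Hc.
- by rewrite -Spt; exact: len_of_irreducible Hn' Ipt.
- by move=> u; rewrite (in_suppE u Hn' Ipt) (in_suppE u Hd' Itp) !map_cat !mem_cat orbC.
Qed.

Lemma conical_conj_supp g v h : cyc_red e g -> conical_conj e v g h ->
  (forall u, in_supp e h u <-> in_supp e g u) /\ conical e v h.
Proof.
move=> Cg [k [gs [H0 [Hst [Ck Hh]]]]].
case: (irreducible_rep g) => w [Hw Iw Lw].
have Inv i : i <= k -> [/\ conj_of g (gs i), len_of e (gs i) (size w) &
    forall u, in_supp e (gs i) u <-> in_supp e g u].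
  elim: i => [_|i IH Hi].
    split; [by exists [::]; rewrite /= cats0 | exact: len_of_weq (weq_sym H0) Lw |].
    by move=> u; split; [exact: in_supp_weq H0 | exact: in_supp_weq (weq_sym H0)].
  have [Ci Li Si] := IH (ltnW Hi).
  have [_ [t [p [Hd [_ [_ Hn]]]]]] := Hst i Hi.
  have [Ci' Li' Si'] := gdec_rotate Cg Lw Ci Li Hd Hn.
  by split=> // u; rewrite Si' Si.
have [_ _ Sk] := Inv k (leqnn k).
split; last exact: conical_weq (weq_sym Hh) Ck.
by move=> u; rewrite -Sk; split; [exact: in_supp_weq Hh | exact: in_supp_weq (weq_sym Hh)].
Qed.

Lemma strongly_non_split_eq g h : (forall u, in_supp e h u <-> in_supp e g u) ->
  strongly_non_split e g -> strongly_non_split e h.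
Proof.
move=> E [Cg Nd]; split; first by apply: connected_in_eq Cg => u; rewrite E.
by case=> w [Nw Hw]; apply: Nd; exists w; split=> [/E | u /E] //; exact: Hw.
Qed.

Lemma strongly_non_split_meets g v : strongly_non_split e g ->
  exists2 u, in_supp e g u & u = v \/ e v u.
Proof.
case=> [[[x Hx] _] Nd]; case: (classic (in_supp e g v)) => Hv; first by exists v; [|left].
apply: NNPP => N; apply: Nd; exists v; split=> // u Hu.
by apply/negP => Hvu; apply: N; exists u => //; right.
Qed.

Lemma conical_conj_SD g v (r : T -> nat) : cyc_red e g -> strongly_non_split e g ->
  in_supp e g v -> (forall u, r u < r v -> e u v) ->
  (exists h, conical_conj e v g h) /\
  (forall h, conical_conj e v g h -> strongly_non_split e h /\ SD_conical e r h).
Proof.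
move=> Cg Sg Hv Hr; split; first exact: conical_conj_exists Cg Sg.1 Hv.
move=> h Hh; have [Es Ch] := conical_conj_supp Cg Hh.
by split; [exact: strongly_non_split_eq Es Sg | exists v].
Qed.

End Raag.

Lemma index_enum_inj (T : finType) (s : seq T) : injective (index^~ (s ++ enum T)).
Proof.
move=> x y E; have Hs z : z \in s ++ enum T by rewrite mem_cat mem_enum orbT.
by rewrite -(nth_index x (Hs x)) E nth_index.
Qed.

Theorem lemma2p11 (T : finType) (e : rel T)
  (e_sym : symmetric e) (e_irr : irreflexive e)
  (g1 g2 : word T)
  (sns1 : strongly_non_split e g1) (sns2 : strongly_non_split e g2)
  (cr1 : cyc_red e g1) (cr2 : cyc_red e g2) :
  exists r : T -> nat, injective r /\
  exists v1 v2, in_supp e g1 v1 /\ in_supp e g2 v2 /\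
    (exists h1, conical_conj e v1 g1 h1) /\
    (forall h1, conical_conj e v1 g1 h1 ->
       strongly_non_split e h1 /\ SD_conical e r h1) /\
    (exists h2, conical_conj e v2 g2 h2) /\
    (forall h2, conical_conj e v2 g2 h2 ->
       strongly_non_split e h2 /\ SD_conical e r h2).
Proof.
have [[[v1 Hv1] _] _] := sns1.
have [v2 Hv2 Ev12] := strongly_non_split_meets v1 sns2.
pose r x := index x ([:: v1; v2] ++ enum T).
have Hr1 x : r x < r v1 -> e x v1 by rewrite /r /= eqxx.
have Hr2 x : r x < r v2 -> e x v2.
  rewrite /r /= eqxx; case: (v1 =P v2) => [//|Nv]; case: (v1 =P x) => [<- _|].
    by case: Ev12 => // E; case: Nv.
  by case: (v2 == x).
have [A1 B1] := conical_conj_SD e_sym cr1 sns1 Hv1 Hr1.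
have [A2 B2] := conical_conj_SD e_sym cr2 sns2 Hv2 Hr2.
by exists r; split; [exact: index_enum_inj | exists v1, v2].
Qed.
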